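(* Let $n \ge 2$, $L\ge 1$, let $\Lambda^l\subseteq[n]$ for $l\in[L]$, put $\Lambda:=\bigcup_{l\in[L]}\Lambda^l$, and let $\mathcal{A}_k^l$ be the Snuffy sparsity patterns $$\mathcal{A}_k^l = \{k\} \cup \begin{cases} [n] & \text{if } k \in \Lambda^l,\\ \Lambda^l & \text{otherwise.}\end{cases}$$ Suppose $|\Lambda| \ge \frac{n-1}{2}$. Then: (1) $k\in\mathcal{A}_k^l$ for all $k\in[n]$, $l\in[L]$; (2) there is a permutation $\gamma$ of $[n]$ such that for all $i\in[n-1]$, $\gamma(i)\in\bigcup_{l=1}^{L}\mathcal{A}^l_{\gamma(i+1)}$; (3) the directed graph on $[n]$ with an arc $k\to j$ whenever $j\in\mathcal{A}_k^l$ for some $l\in[L]$ is strongly connected (every patch attends to every other patch, directly or indirectly), and in fact any two vertices are joined by a directed path of length at most $2$.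
   Context: $[a]=\{1,\dots,a\}$. The set $\mathcal{A}_k^l$ is the set of patches that patch $k$ attends to in layer $l$ of a sparse transformer. Conditions (1)–(3) are the sufficient conditions (from prior work) for a sparse transformer with a softmax-type probability map to be a universal approximator of sequence-to-sequence functions. *)

From mathcomp Require Import all_boot all_fingroup.
Set Implicit Arguments. Unset Strict Implicit. Unset Printing Implicit Defensive.

(* Patches [n] = {1..n} are represented by 'I_n = {0..n-1}; layers [L] by 'I_L.
   Lam l : {set 'I_n} is Lambda^l. *)

Definition LamU (n L : nat) (Lam : 'I_L -> {set 'I_n}) : {set 'I_n} :=
  \bigcup_(l < L) Lam l.

Definition snuffyA (n L : nat) (Lam : 'I_L -> {set 'I_n}) (l : 'I_L) (k : 'I_n)
  : {set 'I_n} :=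
  k |: (if k \in Lam l then [set: 'I_n] else Lam l).

Definition snuffy_arc (n L : nat) (Lam : 'I_L -> {set 'I_n}) : rel 'I_n :=
  fun k j => [exists l : 'I_L, j \in snuffyA Lam l k].

From mathcomp Require Import all_boot all_fingroup.
From mathcomp Require Import zify.

Set Implicit Arguments.
Unset Strict Implicit.
Unset Printing Implicit Defensive.

(* Every patch of Lambda attends to everything, and every patch attends to
   Lambda; hence k -> j is an arc as soon as k or j lies in Lambda.  Any fixed
   m in Lambda (nonempty, as n >= 2) gives paths k -> m -> j.  For (2),
   alternate the patches outside Lambda with those inside it: this is possible
   exactly when n - |Lambda| <= |Lambda| + 1, and then every two consecutive
   patches include one of Lambda. *)

Section Interleave.
Variable T : eqType.

Fixpoint interleave (t s : seq T) : seq T :=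
  match t with
  | [::] => s
  | x :: t' => x :: match s with [::] => t' | y :: s' => y :: interleave t' s' end
  end.

Lemma perm_interleave t s : perm_eq (interleave t s) (t ++ s).
Proof.
elim: t s => [|x t IH] [|y s] //=; rewrite ?cats0 // perm_cons.
by rewrite perm_sym -(cat1s y s) perm_catCA /= perm_cons perm_sym.
Qed.

Variable P : pred T.

Definition either : rel T := fun x y => P x || P y.

Lemma sorted_either_all s : all P s -> sorted either s.
Proof.
elim: s => [|x [|y s] IH] //= /andP[Px /andP[Py Ps]].
by rewrite {1}/either Px; apply: IH; rewrite /= Py.
Qed.

Lemma sorted_either_interleave t s :
  all P s -> size t <= (size s).+1 -> sorted either (interleave t s).
Proof.
elim: t s => [|x t IH] [|y s] //=.
- by move=> Ps _; exact: (@sorted_either_all (y :: s)).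
- by case: t {IH}.
move=> /andP[Py Ps] size_ts; rewrite {1}/either Py orbT /=.
have := IH s Ps size_ts.
by case: (interleave t s) => [|z w] //= ->; rewrite /either Py andbT.
Qed.

End Interleave.

Lemma perm_ord_sorted n (x0 : 'I_n) (e : rel 'I_n) (s : seq 'I_n) :
  uniq s -> size s = n -> sorted e s ->
  exists g : {perm 'I_n}, forall i j : 'I_n, nat_of_ord j = i.+1 -> e (g i) (g j).
Proof.
move=> s_uniq size_s s_sorted.
have nth_inj : injective (fun i : 'I_n => nth x0 s i).
  by move=> i j /eqP; rewrite nth_uniq ?size_s // => /eqP /val_inj.
exists (perm nth_inj) => i j ji; rewrite !permE ji.
by apply: (sortedP x0 s_sorted); rewrite size_s -ji.
Qed.

Section SnuffyGraph.
Variables (n L : nat) (Lam : 'I_L -> {set 'I_n}).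

Lemma snuffyA_id k l : k \in snuffyA Lam l k.
Proof. by rewrite /snuffyA !inE eqxx. Qed.

Lemma mem_bigcup_snuffyA k j :
  (j \in \bigcup_(l < L) snuffyA Lam l k) = snuffy_arc Lam k j.
Proof. by apply/bigcupP/existsP => [[l _ jA] | [l jA]]; exists l. Qed.

Lemma snuffy_arc_LamU k j :
  (k \in LamU Lam) || (j \in LamU Lam) -> snuffy_arc Lam k j.
Proof.
rewrite -mem_bigcup_snuffyA.
case/orP => /bigcupP[l _ lamL]; apply/bigcupP; exists l => //;
  rewrite /snuffyA !inE.
  by rewrite lamL inE orbT.
by case: ifP => _; rewrite ?inE ?lamL orbT.
Qed.

Lemma snuffy_arc_via m k j :
  m \in LamU Lam -> snuffy_arc Lam k m && snuffy_arc Lam m j.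
Proof. by move=> mL; rewrite !snuffy_arc_LamU // mL ?orbT. Qed.

Lemma snuffy_chain (x0 : 'I_n) :
  n - 1 <= 2 * #|LamU Lam| ->
  exists g : {perm 'I_n}, forall i j : 'I_n, nat_of_ord j = i.+1 ->
    snuffy_arc Lam (g j) (g i).
Proof.
set A := LamU Lam => card_A.
have card_notA : #|~: A| <= #|A|.+1.
  by move: card_A; rewrite -[n in n - 1](card_ord n) -(cardsC A); lia.
set u := interleave (enum (~: A)) (enum A).
have perm_u : perm_eq u (enum (~: A) ++ enum A) by exact: perm_interleave.
have [|||g gP] := @perm_ord_sorted n x0 (either (mem A)) u.
- rewrite (perm_uniq perm_u) cat_uniq !enum_uniq /= andbT.
  by apply/hasPn => x; rewrite !mem_enum inE => ->.
- by rewrite (perm_size perm_u) size_cat -!cardE addnC cardsC card_ord.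
- apply: sorted_either_interleave; first by apply/allP => x; rewrite mem_enum.
  by rewrite -!cardE.
exists g => i j ji; apply: snuffy_arc_LamU.
by rewrite orbC; exact: gP.
Qed.

End SnuffyGraph.

Theorem mainTheorem2 (n L : nat) (Lam : 'I_L -> {set 'I_n}) :
  2 <= n -> 1 <= L ->
  n - 1 <= 2 * #|LamU Lam| ->
  (* (1) *)
  (forall (k : 'I_n) (l : 'I_L), k \in snuffyA Lam l k) /\
  (* (2) *)
  (exists g : {perm 'I_n}, forall i j : 'I_n, nat_of_ord j = i.+1 ->
      g i \in \bigcup_(l < L) snuffyA Lam l (g j)) /\
  (* (3) strongly connected, with paths of length at most 2 *)
  (forall k j : 'I_n, connect (snuffy_arc Lam) k j) /\
  (forall k j : 'I_n,
      (k == j) || snuffy_arc Lam k j ||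
      [exists m : 'I_n, snuffy_arc Lam k m && snuffy_arc Lam m j]).
Proof.
move=> n_ge2 _ card_Lam.
have [m mL] : exists m, m \in LamU Lam.
  by apply/set0Pn; rewrite -card_gt0; lia.
split; first exact: snuffyA_id.
split.
  have [g gP] := snuffy_chain m card_Lam.
  by exists g => i j ji; rewrite mem_bigcup_snuffyA; exact: gP.
split=> k j.
  case/andP: (snuffy_arc_via k j mL) => km mj.
  exact: connect_trans (connect1 km) (connect1 mj).
by apply/orP; right; apply/existsP; exists m; exact: snuffy_arc_via.
Qed.
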